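(* Fix a query-answering mechanism $\mathcal K$. Suppose that for each $j=1,\ldots,k$, $(\boldsymbol\varepsilon,\boldsymbol\mu^j,\mathbf W^j)$ is semi-balanced, where $\boldsymbol\mu^j=(\mu^j_1,\ldots,\mu^j_n)$ and $\mathbf W^j=(W^j_1,\ldots,W^j_n)$. Let $f_1,\ldots,f_n:[0,\infty]^k\to[0,\infty]$ be non-decreasing, subadditive functions with $f_i(\mathbf 0)=0$. Define $\mu_i(\mathbf Q)=f_i(\mu^1_i(\mathbf Q),\ldots,\mu^k_i(\mathbf Q))$ and $W_i(\varepsilon)=f_i(W^1_i(\varepsilon),\ldots,W^k_i(\varepsilon))$ for $i=1,\ldots,n$. Then $(\boldsymbol\varepsilon,\boldsymbol\mu,\mathbf W)$ is semi-balanced, where $\boldsymbol\mu=(\mu_1,\ldots,\mu_n)$, $\mathbf W=(W_1,\ldots,W_n)$.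
   Context: Fix a bounded $X\subseteq\mathbb R$; databases are $\mathbf x\in X^n$, and $\mathbf x^{(i)}$ is $\mathbf x$ with the $i$-th coordinate set to $0$. Queries are pairs $\mathbf Q=(\mathbf q,v)$, $\mathbf q\in\mathbb R^n$, $v\in[0,\infty]$. A query-answering mechanism $\mathcal K$ assigns to each query $\mathbf Q$ a map $\mathcal K_{\mathbf Q}$ from databases to real random variables. The privacy loss is $\varepsilon_i(\mathcal K_{\mathbf Q})=\sup_{S,\mathbf x}\left|\log\frac{\Pr[\mathcal K_{\mathbf Q}(\mathbf x)\in S]}{\Pr[\mathcal K_{\mathbf Q}(\mathbf x^{(i)})\in S]}\right|$ (over $\mathbf x\in X^n$, measurable $S\subseteq\mathbb R$), and $\boldsymbol\varepsilon=(\varepsilon_1,\ldots,\varepsilon_n)$. A contract function is a non-decreasing $W:[0,\infty]\to[0,\infty]$ with $W(0)=0$. Subadditive means $f(\mathbf x+\mathbf y)\le f(\mathbf x)+f(\mathbf y)$; non-decreasing means coordinatewise monotone. The determinacy relation $\mathbf S\rightarrow\mathbf Q$ is the smallest relation satisfying: (Summation) $\{(\mathbf q_1,v_1),\ldots,(\mathbf q_k,v_k)\}\rightarrow(\sum_j\mathbf q_j,\sum_jv_j)$; (Scalar multiplication) $\{(\mathbf q,v)\}\rightarrow(c\mathbf q,c^2v)$ for $c\in\mathbb R$; (Relaxation) $\{(\mathbf q,v)\}\rightarrow(\mathbf q,v')$ for $v\le v'$; (Transitivity) if $\mathbf S_j\rightarrow\mathbf Q_j$ for all $j$ and $\{\mathbf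 Q_1,\ldots,\mathbf Q_k\}\rightarrow\mathbf Q$ then $\mathbf S_1\uplus\cdots\uplus\mathbf S_k\rightarrow\mathbf Q$. A function $\mu$ from queries to $[0,\infty]$ is arbitrage-free if for every $m\ge1$, $\{\mathbf Q_1,\ldots,\mathbf Q_m\}\rightarrow\mathbf Q$ implies $\mu(\mathbf Q)\le\sum_j\mu(\mathbf Q_j)$. Micro-payments $\mu_i$ (functions from queries to $[0,\infty]$) are: fair if $q_i=0$ implies $\mu_i(\mathbf q,v)=0$; micro arbitrage-free if $\mu_i$ is arbitrage-free; compensating for $W_i$ if $\mu_i(\mathbf Q)\ge W_i(\varepsilon_i(\mathcal K_{\mathbf Q}))$ for all $\mathbf Q$. $(\boldsymbol\varepsilon,\boldsymbol\mu,\mathbf W)$ is semi-balanced if every $\mu_i$ is fair, micro arbitrage-free and compensating for $W_i$. *)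

From HB Require Import structures.
From mathcomp Require Import all_boot all_order all_algebra.
From mathcomp Require Import all_classical all_reals all_analysis.
Set Implicit Arguments. Unset Strict Implicit. Unset Printing Implicit Defensive.
Import Order.TTheory GRing.Theory Num.Theory.
Local Open Scope classical_set_scope.
Local Open Scope ring_scope.

Section Defs.
Variable R : realType.
Variable n : nat.

Definition database := 'rV[R]_n.

Definition in_Xn (X : set R) (x : database) : Prop := forall i, X (x ord0 i).

Definition db_zero (x : database) (i : 'I_n) : database :=
  \row_j (if j == i then 0 else x ord0 j).

Definition query := ('rV[R]_n * \bar R)%type.
Definition valid_query (Q : query) : Prop := (0 <= Q.2)%E.

(* A query-answering mechanism: to each query and database, the distribution
   of the real random variable K_Q(x) (a probability measure on Borel sets of R). *)
Definition mechanism := query -> database -> probability (measurableTypeR R) R.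

(* |log (a / b)| for probabilities a, b in [0,1], with the conventions
   log(0/0) := 0 and |log(a/0)| = |log(0/b)| = +oo for a, b > 0. *)
Definition abs_log_ratio (a b : \bar R) : \bar R :=
  let a' := fine a in let b' := fine b in
  if (a' == 0) && (b' == 0) then 0%E
  else if (a' == 0) || (b' == 0) then +oo%E
  else (`| ln (a' / b') |)%:E.

(* privacy loss eps_i(K_Q) = sup_{S, x in X^n} |log(Pr[K_Q(x) in S]/Pr[K_Q(x^(i)) in S])|,
   the supremum being taken in [0, +oo] (so the empty supremum is 0). *)
Definition privacy_loss (X : set R) (K : mechanism) (i : 'I_n) (Q : query) : \bar R :=
  ereal_sup ([set 0%E] `|`
    [set e | exists (x : database) (S : set R),
        in_Xn X x /\ measurable S /\
        e = abs_log_ratio (K Q x S) (K Q (db_zero x i) S)]).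

Definition sum_queries (S : seq query) : query :=
  (\sum_(Q <- S) Q.1, (\sum_(Q <- S) Q.2)%E).

(* The determinacy relation S -> Q, S a multiset (list up to permutation). *)
Inductive determines : seq query -> query -> Prop :=
| det_sum (S : seq query) : S <> [::] -> determines S (sum_queries S)
| det_scale (q : 'rV[R]_n) (v : \bar R) (c : R) :
    determines [:: (q, v)] (c *: q, ((c ^+ 2)%:E * v)%E)
| det_relax (q : 'rV[R]_n) (v v' : \bar R) :
    (v <= v')%E -> determines [:: (q, v)] (q, v')
| det_trans (Ss : seq (seq query * query)) (Q : query) :
    Ss <> [::] ->
    (forall p, p \in Ss -> determines p.1 p.2) ->
    determines (map snd Ss) Q ->
    determines (flatten (map fst Ss)) Q
| det_perm (S S' : seq query) (Q : query) :
    perm_eq S S' -> determines S Q -> determines S' Q.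

Definition arbitrage_free (mu : query -> \bar R) : Prop :=
  forall (S : seq query) (Q : query),
    S <> [::] -> (forall Q', Q' \in S -> valid_query Q') ->
    determines S Q -> (mu Q <= \sum_(Q' <- S) mu Q')%E.

Definition micro_payment (mu : query -> \bar R) : Prop :=
  forall Q, valid_query Q -> (0 <= mu Q)%E.

Definition fair (i : 'I_n) (mu : query -> \bar R) : Prop :=
  forall Q, valid_query Q -> Q.1 ord0 i = 0 -> mu Q = 0%E.

Definition compensating (X : set R) (K : mechanism) (i : 'I_n)
    (mu : query -> \bar R) (W : \bar R -> \bar R) : Prop :=
  forall Q, valid_query Q -> (W (privacy_loss X K i Q) <= mu Q)%E.

Definition contract_function (W : \bar R -> \bar R) : Prop :=
  W 0%E = 0%E /\ (forall e, (0 <= e)%E -> (0 <= W e)%E) /\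
  (forall e e', (0 <= e)%E -> (e <= e')%E -> (W e <= W e')%E).

(* (eps, mu, W) semi-balanced, for the mechanism K (eps = privacy losses of K) *)
Definition semi_balanced (X : set R) (K : mechanism)
    (mu : 'I_n -> query -> \bar R) (W : 'I_n -> \bar R -> \bar R) : Prop :=
  forall i, micro_payment (mu i) /\ fair i (mu i) /\ arbitrage_free (mu i) /\
            compensating X K i (mu i) (W i).

End Defs.

Section Fun.
Variable R : realType.
Variable k : nat.
Definition nonneg_vec (x : 'I_k -> \bar R) : Prop := forall j, (0 <= x j)%E.

Definition maps_into_nonneg (f : ('I_k -> \bar R) -> \bar R) : Prop :=
  forall x, nonneg_vec x -> (0 <= f x)%E.
Definition nondecreasing_vec (f : ('I_k -> \bar R) -> \bar R) : Prop :=
  forall x y, nonneg_vec x -> nonneg_vec y -> (forall j, (x j <= y j)%E) ->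
    (f x <= f y)%E.
Definition subadditive_vec (f : ('I_k -> \bar R) -> \bar R) : Prop :=
  forall x y, nonneg_vec x -> nonneg_vec y ->
    (f (fun j => x j + y j)%E <= f x + f y)%E.
End Fun.

From HB Require Import structures.
From mathcomp Require Import all_boot all_order all_algebra.
From mathcomp Require Import all_classical all_reals all_analysis.
Set Implicit Arguments. Unset Strict Implicit. Unset Printing Implicit Defensive.
Import Order.TTheory GRing.Theory Num.Theory.
Local Open Scope ring_scope.

(* Each of the four semi-balance conditions passes through [f] separately.
   Arbitrage-freeness is the only one needing work: if [S] determines [Q], then
   mu^j(Q) <= sum_S mu^j for every j, so monotonicity of [f] followed by its
   subadditivity, extended from two summands to finite sums with [f 0 = 0],
   gives f(mu(Q)) <= f(sum_S mu) <= sum_S f(mu). *)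

Lemma subadditive_vec_sum (R : realType) (k : nat) (T : eqType)
    (f : ('I_k -> \bar R) -> \bar R) (g : 'I_k -> T -> \bar R) (S : seq T) :
  maps_into_nonneg f -> subadditive_vec f -> f (fun _ => 0%E) = 0%E ->
  (forall x, x \in S -> nonneg_vec (g^~ x)) ->
  (f (fun j => \sum_(x <- S) g j x) <= \sum_(x <- S) f (g^~ x))%E.
Proof.
move=> f_ge0 f_sub f0; elim: S => [|a S IH] g_ge0.
  by under eq_fun do rewrite big_nil; rewrite f0 big_nil.
under eq_fun do rewrite big_cons; rewrite big_cons.
have g_ge0S x : x \in S -> nonneg_vec (g^~ x).
  by move=> xS; apply: g_ge0; rewrite inE xS orbT.
have sum_ge0 : nonneg_vec (fun j => \sum_(x <- S) g j x).
  by move=> j; rewrite big_seq; apply: sume_ge0 => x /g_ge0S.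
apply: le_trans (f_sub _ _ _ sum_ge0) _; first by apply: g_ge0; rewrite inE eqxx.
by apply: leeD => //; apply: IH.
Qed.

Lemma determines_valid (R : realType) (n : nat) (S : seq (query R n))
    (Q : query R n) :
  determines S Q -> (forall Q', Q' \in S -> valid_query Q') -> valid_query Q.
Proof.
elim=> {S Q}.
- move=> S _ S_valid; rewrite /valid_query /=.
  by rewrite big_seq; apply: sume_ge0 => Q' /S_valid.
- move=> q v c S_valid; apply: mule_ge0; first by rewrite lee_fin sqr_ge0.
  by apply: (S_valid (q, v)); rewrite inE.
- move=> q v v' le_vv' S_valid; apply: le_trans le_vv'.
  by apply: (S_valid (q, v)); rewrite inE.
- move=> Ss Q _ _ IHs _ IH S_valid; apply: IH => _ /mapP [p pSs ->].
  apply: IHs => // Q' Q'p; apply: S_valid.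
  by apply/flattenP; exists p.1 => //; apply/mapP; exists p.
- move=> S S' Q SS' _ IH S'_valid; apply: IH => Q' Q'S.
  by apply: S'_valid; rewrite -(perm_mem SS').
Qed.

Lemma privacy_loss_ge0 (R : realType) (n : nat) (X : set R) (K : mechanism R n)
    (i : 'I_n) (Q : query R n) :
  (0 <= privacy_loss X K i Q)%E.
Proof. by apply: ereal_sup_ubound; left. Qed.

Section Composition.
Variables (R : realType) (n k : nat) (f : ('I_k -> \bar R) -> \bar R).
Variable mu : 'I_k -> query R n -> \bar R.
Hypothesis f_ge0 : maps_into_nonneg f.
Hypothesis mu_ge0 : forall j, micro_payment (mu j).

Let comp_mu (Q : query R n) : \bar R := f (fun j => mu j Q).

Lemma micro_payment_comp : micro_payment comp_mu.
Proof. by move=> Q vQ; apply: f_ge0 => j; apply: mu_ge0. Qed.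

Lemma fair_comp (i : 'I_n) :
  f (fun _ => 0%E) = 0%E -> (forall j, fair i (mu j)) -> fair i comp_mu.
Proof.
move=> f0 mu_fair Q vQ Qi0; rewrite /comp_mu -f0; congr f.
by apply: funext => j; apply: mu_fair.
Qed.

Lemma arbitrage_free_comp :
  nondecreasing_vec f -> subadditive_vec f -> f (fun _ => 0%E) = 0%E ->
  (forall j, arbitrage_free (mu j)) -> arbitrage_free comp_mu.
Proof.
move=> f_mono f_sub f0 mu_af S Q S_ne S_valid SQ.
have S_ge0 Q' : Q' \in S -> nonneg_vec (mu^~ Q').
  by move=> Q'S j; apply/mu_ge0/S_valid.
rewrite /comp_mu; apply: le_trans (subadditive_vec_sum f_ge0 f_sub f0 S_ge0).
apply: f_mono => j.
- exact/mu_ge0/(determines_valid SQ S_valid).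
- by rewrite big_seq; apply: sume_ge0 => Q' /S_ge0.
- exact: mu_af.
Qed.

Lemma compensating_comp (X : set R) (K : mechanism R n) (i : 'I_n)
    (W : 'I_k -> \bar R -> \bar R) :
  nondecreasing_vec f -> (forall j, contract_function (W j)) ->
  (forall j, compensating X K i (mu j) (W j)) ->
  compensating X K i comp_mu (fun e => f (fun j => W j e)).
Proof.
move=> f_mono W_contract mu_comp Q vQ; apply: f_mono => j.
- by have [_ [W_ge0 _]] := W_contract j; apply/W_ge0/privacy_loss_ge0.
- exact: mu_ge0.
- exact: mu_comp.
Qed.

End Composition.

Theorem proposition10 (R : realType) (n k : nat) (X : set R)
  (hX : exists M : R, forall x, X x -> `|x| <= M)
  (K : mechanism R n)
  (mu : 'I_k -> 'I_n -> query R n -> \bar R)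
  (W : 'I_k -> 'I_n -> \bar R -> \bar R)
  (hW : forall j i, contract_function (W j i))
  (hsb : forall j, semi_balanced X K (mu j) (W j))
  (f : 'I_n -> ('I_k -> \bar R) -> \bar R)
  (hf_nonneg : forall i, maps_into_nonneg (f i))
  (hf_mono : forall i, nondecreasing_vec (f i))
  (hf_sub : forall i, subadditive_vec (f i))
  (hf0 : forall i, f i (fun _ => 0%E) = 0%E) :
  semi_balanced X K (fun i Q => f i (fun j => mu j i Q))
                    (fun i e => f i (fun j => W j i e)).
Proof.
move=> i.
have mu_ge0 j : micro_payment (mu j i) by have [] := hsb j i.
have mu_fair j : fair i (mu j i) by have [_ []] := hsb j i.
have mu_af j : arbitrage_free (mu j i) by have [_ [_ []]] := hsb j i.
have mu_comp j : compensating X K i (mu j i) (W j i) by have [_ [_ []]] := hsb j i.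
split; first exact: micro_payment_comp.
split; first exact: fair_comp.
split; first exact: arbitrage_free_comp.
exact: compensating_comp.
Qed.
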